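(* For every $\delta\in\mathcal{T}_D$ and $\kappa\in\mathcal{T}_C$: (1) $[\![\delta]\!]\subseteq\mathcal{SN}$ and $[\![\kappa]\!]\subseteq\mathcal{SN}^*$; (2) for every term variable $x$ and stack $\vec N$, if $x\vec N\in\mathcal{SN}$ then $x\vec N\in[\![\delta]\!]$; (3) for every $n\ge|\kappa|$ and term variables $x_1,\dots,x_n$, the stack $x_1:\cdots:x_n$ belongs to $[\![\kappa]\!]$.
   Context: $\lambda\mu$-calculus (Parigot). Terms $M,N ::= x \mid \lambda x.M \mid MN \mid \mu\alpha.[\beta]M$ over disjoint denumerable sets of term variables and names ($\lambda$ binds $x$, $\mu$ binds $\alpha$). $M[N/x]$ is capture-avoiding substitution; structural substitution $T[\alpha\Leftarrow L]$ replaces every subterm $[\alpha]N$ of $T$ by $[\alpha]N'L$ where $N'=N[\alpha\Leftarrow L]$ (recursively), commuting with all other constructors. Reduction is the compatible closure of $(\lambda x.M)N\to M[N/x]$ and $(\mu\beta.[\gamma]M)N\to\mu\beta.(([\gamma]M)[\beta\Leftarrow N])$. $\mathcal{SN}$ is the set of terms with no infinite reduction sequence. A stack is a finite (possibly empty) sequence $\vec L=L_1:\cdots:L_k$ of terms, and $M\vec L$ denotes $ML_1\cdots L_k$; $\mathcal{SN}^*$ is the set of stacks all of whose elements are in $\mathcal{SN}$. Types: with constant $\nu$ and symbol $\omega$ (not itself a type), $\mathcal{T}_D:\ \delta ::= \nu \mid \omega\to\nu \mid \kappa\to\nu \mid \delta\wedge\delta$; $\mathcal{T}_C:\ \kappa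 ::= \delta\times\omega \mid \delta\times\kappa \mid \kappa\wedge\kappa$. Interpretation: $[\![\nu]\!]=[\![\omega\to\nu]\!]=\mathcal{SN}$; $[\![\kappa\to\nu]\!]=\{M\mid \forall\vec L\in[\![\kappa]\!].\ M\vec L\in\mathcal{SN}\}$; $[\![\delta\times\omega]\!]=\{N:\vec L\mid N\in[\![\delta]\!],\vec L\in\mathcal{SN}^*\}$; $[\![\delta\times\kappa]\!]=\{N:\vec L\mid N\in[\![\delta]\!],\vec L\in[\![\kappa]\!]\}$; $[\![\sigma\wedge\tau]\!]=[\![\sigma]\!]\cap[\![\tau]\!]$. Length: $|\delta\times\omega|=1$, $|\delta\times\kappa|=1+|\kappa|$, $|\kappa_1\wedge\kappa_2|=\max(|\kappa_1|,|\kappa_2|)$. *)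

(* Lambda-mu calculus with de Bruijn indices
   (two independent index spaces: term variables and names). *)
From Stdlib Require Import Arith List.
Import ListNotations.

(* Tm_Var x       : term variable x
   Tm_Lam M       : \x.M            (binds term index 0 in M)
   Tm_App M N     : M N
   Tm_Mu b M      : mu a.[b]M       (binds name index 0 in the command [b]M;
                                     b is a name index in the extended context) *)
Inductive term : Type :=
| Tm_Var : nat -> term
| Tm_Lam : term -> term
| Tm_App : term -> term -> term
| Tm_Mu  : nat -> term -> term.

Fixpoint lift_t (k : nat) (t : term) : term :=
  match t with
  | Tm_Var x => if k <=? x then Tm_Var (S x) else Tm_Var x
  | Tm_Lam M => Tm_Lam (lift_t (S k) M)
  | Tm_App M N => Tm_App (lift_t k M) (lift_t k N)
  | Tm_Mu b M => Tm_Mu b (lift_t k M)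
  end.

Fixpoint lift_n (k : nat) (t : term) : term :=
  match t with
  | Tm_Var x => Tm_Var x
  | Tm_Lam M => Tm_Lam (lift_n k M)
  | Tm_App M N => Tm_App (lift_n k M) (lift_n k N)
  | Tm_Mu b M => Tm_Mu (if S k <=? b then S b else b) (lift_n (S k) M)
  end.

(* capture-avoiding substitution M[N/k] removing variable k
   (N is already expressed in the context of the binder position) *)
Fixpoint subst (k : nat) (N : term) (t : term) : term :=
  match t with
  | Tm_Var x =>
      if x =? k then N
      else if k <? x then Tm_Var (pred x) else Tm_Var x
  | Tm_Lam M => Tm_Lam (subst (S k) (lift_t 0 N) M)
  | Tm_App M P => Tm_App (subst k N M) (subst k N P)
  | Tm_Mu b M => Tm_Mu b (subst k (lift_n 0 N) M)
  end.

(* structural substitution T[a <= N]: every [a]P becomes [a](P' N) *)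
Fixpoint ssub (a : nat) (N : term) (t : term) : term :=
  match t with
  | Tm_Var x => Tm_Var x
  | Tm_Lam M => Tm_Lam (ssub a (lift_t 0 N) M)
  | Tm_App M P => Tm_App (ssub a N M) (ssub a N P)
  | Tm_Mu b M =>
      let N' := lift_n 0 N in
      let M' := ssub (S a) N' M in
      Tm_Mu b (if b =? S a then Tm_App M' N' else M')
  end.

(* one-step reduction: compatible closure of beta and structural (mu) rule.
   (mu b.[g]M) N -> mu b.(([g]M)[b <= N]); here b is name index 0 inside
   the body, N is shifted past the mu binder. *)
Inductive red : term -> term -> Prop :=
| red_beta : forall M N, red (Tm_App (Tm_Lam M) N) (subst 0 N M)
| red_mu : forall g M N,
    red (Tm_App (Tm_Mu g M) N)
        (let N' := lift_n 0 N in
         let M' := ssub 0 N' M in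
         Tm_Mu g (if g =? 0 then Tm_App M' N' else M'))
| red_lam : forall M M', red M M' -> red (Tm_Lam M) (Tm_Lam M')
| red_appl : forall M M' N, red M M' -> red (Tm_App M N) (Tm_App M' N)
| red_appr : forall M N N', red N N' -> red (Tm_App M N) (Tm_App M N')
| red_mu_body : forall b M M', red M M' -> red (Tm_Mu b M) (Tm_Mu b M').

Definition SN (t : term) : Prop := Acc (fun u v => red v u) t.

Definition stack := list term.
Definition app_stack (M : term) (Ls : stack) : term := fold_left Tm_App Ls M.
Definition SNstar (Ls : stack) : Prop := Forall SN Ls.

(* types: T_D (dtype) and T_C (ctype) *)
Inductive dtype : Type :=
| D_nu : dtype
| D_omega_arr : dtype                  (* omega -> nu *)
| D_arr : ctype -> dtype               (* kappa -> nu *)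
| D_and : dtype -> dtype -> dtype
with ctype : Type :=
| C_omega : dtype -> ctype             (* delta x omega *)
| C_prod : dtype -> ctype -> ctype     (* delta x kappa *)
| C_and : ctype -> ctype -> ctype.

Fixpoint interp_d (d : dtype) (M : term) {struct d} : Prop :=
  match d with
  | D_nu => SN M
  | D_omega_arr => SN M
  | D_arr k => forall Ls, interp_c k Ls -> SN (app_stack M Ls)
  | D_and d1 d2 => interp_d d1 M /\ interp_d d2 M
  end
with interp_c (k : ctype) (Ls : stack) {struct k} : Prop :=
  match k with
  | C_omega d => exists N L, Ls = N :: L /\ interp_d d N /\ SNstar L
  | C_prod d k' => exists N L, Ls = N :: L /\ interp_d d N /\ interp_c k' L
  | C_and k1 k2 => interp_c k1 Ls /\ interp_c k2 Ls
  end.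

Fixpoint clen (k : ctype) : nat :=
  match k with
  | C_omega _ => 1
  | C_prod _ k' => S (clen k')
  | C_and k1 k2 => Nat.max (clen k1) (clen k2)
  end.

(* A term
   whose interpretation is [forall Ls in [[k]], M Ls in SN] is SN because some
   stack of variables lies in [[k]] (part 3); conversely a neutral term [x Ns]
   can only reduce inside its arguments, so [x (Ns ++ Ls)] is SN as soon as
   [Ns] and [Ls] are (part 1), which gives part 2. *)
From Stdlib Require Import List Lia.
Import ListNotations.

Scheme dtype_mut := Induction for dtype Sort Prop
with ctype_mut := Induction for ctype Sort Prop.

Lemma app_stack_app M l m : app_stack M (l ++ m) = app_stack (app_stack M l) m.
Proof. apply fold_left_app. Qed.

Lemma app_stack_snoc M l a : app_stack M (l ++ [a]) = Tm_App (app_stack M l) a.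
Proof. apply fold_left_app. Qed.

Lemma SN_app_inv M N : SN (Tm_App M N) -> SN M /\ SN N.
Proof.
  intros H; remember (Tm_App M N) as t eqn:Et; revert M N Et.
  induction H as [t _ IH]; intros M N ->; split; constructor.
  - intros M' HM. exact (proj1 (IH _ (red_appl _ _ _ HM) _ _ eq_refl)).
  - intros N' HN. exact (proj2 (IH _ (red_appr _ _ _ HN) _ _ eq_refl)).
Qed.

Lemma SN_app_stack_inv Ls : forall M, SN (app_stack M Ls) -> SN M /\ SNstar Ls.
Proof.
  induction Ls as [|L Ls IH]; intros M H; [split; [exact H | constructor]|].
  destruct (IH _ H) as [HML HLs]; destruct (SN_app_inv _ _ HML).
  split; [|constructor]; auto.
Qed.

Lemma SN_var x : SN (Tm_Var x).
Proof. constructor; intros y H; inversion H. Qed.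

Lemma SNstar_map_var xs : SNstar (map Tm_Var xs).
Proof. induction xs; constructor; auto using SN_var. Qed.

Inductive red_stack : stack -> stack -> Prop :=
| red_stack_hd a a' l : red a a' -> red_stack (a :: l) (a' :: l)
| red_stack_tl a l l' : red_stack l l' -> red_stack (a :: l) (a :: l').

Lemma red_stack_app l l' m : red_stack l l' -> red_stack (l ++ m) (l' ++ m).
Proof. induction 1; constructor; auto. Qed.

Lemma red_stack_last l a a' : red a a' -> red_stack (l ++ [a]) (l ++ [a']).
Proof. induction l; constructor; auto. Qed.

Lemma Acc_red_stack l : SNstar l -> Acc (fun u v => red_stack v u) l.
Proof.
  induction 1 as [|h t Hh _ Ht].
  - constructor; intros y H; inversion H.
  - revert t Ht; induction Hh as [h _ IHh]; intros t Ht.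
    induction Ht as [t Ht IHt].
    constructor; intros y Hy; inversion Hy; subst.
    + apply IHh; [assumption | constructor; assumption].
    + apply IHt; assumption.
Qed.

Lemma app_stack_var_not_redex x l :
  (forall M, app_stack (Tm_Var x) l <> Tm_Lam M) /\
  (forall b M, app_stack (Tm_Var x) l <> Tm_Mu b M).
Proof.
  destruct l as [|a l] using rev_ind; [|rewrite app_stack_snoc];
    split; intros; discriminate.
Qed.

Lemma red_app_stack_var x l t :
  red (app_stack (Tm_Var x) l) t ->
  exists l', red_stack l l' /\ t = app_stack (Tm_Var x) l'.
Proof.
  revert t; induction l as [|a l IH] using rev_ind; intros t Hr; [inversion Hr|].
  rewrite app_stack_snoc in Hr.
  destruct (app_stack_var_not_redex x l) as [Hlam Hmu].
  inversion Hr as [M N E|g M N E| |P P' N HP|P N N' HN|]; subst.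
  - now destruct (Hlam M).
  - now destruct (Hmu g M).
  - destruct (IH _ HP) as (l' & Hl' & ->).
    exists (l' ++ [a]); split; [apply red_stack_app | rewrite app_stack_snoc]; auto.
  - exists (l ++ [N']); split; [apply red_stack_last | rewrite app_stack_snoc]; auto.
Qed.

Lemma SN_app_stack_var x l : SNstar l -> SN (app_stack (Tm_Var x) l).
Proof.
  intros Hl; apply Acc_red_stack in Hl; induction Hl as [l _ IH].
  constructor; intros t Hr.
  destruct (red_app_stack_var _ _ _ Hr) as (l' & Hl' & ->).
  now apply IH.
Qed.

Definition interp_d_adequate (d : dtype) : Prop :=
  (forall M, interp_d d M -> SN M) /\
  (forall x Ns, SN (app_stack (Tm_Var x) Ns) -> interp_d d (app_stack (Tm_Var x) Ns)).

Definition interp_c_adequate (k : ctype) : Prop :=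
  (forall Ls, interp_c k Ls -> SNstar Ls) /\
  (forall xs, clen k <= length xs -> interp_c k (map Tm_Var xs)).

Lemma interp_arr_adequate k :
  interp_c_adequate k -> interp_d_adequate (D_arr k).
Proof.
  intros [HkSN Hkvar]; split; simpl.
  - intros M HM.
    assert (Hxs : interp_c k (map Tm_Var (repeat 0 (clen k))))
      by (apply Hkvar; rewrite repeat_length; auto).
    exact (proj1 (SN_app_stack_inv _ _ (HM _ Hxs))).
  - intros x Ns HNs Ls HLs.
    rewrite <- app_stack_app; apply SN_app_stack_var, Forall_app.
    split; [exact (proj2 (SN_app_stack_inv _ _ HNs)) | exact (HkSN _ HLs)].
Qed.

Lemma interp_and_adequate d1 d2 :
  interp_d_adequate d1 -> interp_d_adequate d2 -> interp_d_adequate (D_and d1 d2).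
Proof.
  intros [HSN1 Hneutral1] [_ Hneutral2]; split; simpl.
  - intros M [HM _]; exact (HSN1 M HM).
  - intros x Ns HNs; split; [apply Hneutral1 | apply Hneutral2]; exact HNs.
Qed.

Lemma interp_d_var d x : interp_d_adequate d -> interp_d d (Tm_Var x).
Proof. intros [_ Hneutral]; exact (Hneutral x [] (SN_var x)). Qed.

Lemma interp_omega_adequate d :
  interp_d_adequate d -> interp_c_adequate (C_omega d).
Proof.
  intros Hd; split; simpl.
  - intros Ls (N & L & -> & HN & HL).
    constructor; [exact (proj1 Hd N HN) | exact HL].
  - intros [|y ys] Hlen; simpl in Hlen; [lia |].
    exists (Tm_Var y), (map Tm_Var ys).
    split; [reflexivity | split; [apply interp_d_var, Hd | apply SNstar_map_var]].
Qed.

Lemma interp_prod_adequate d k :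
  interp_d_adequate d -> interp_c_adequate k -> interp_c_adequate (C_prod d k).
Proof.
  intros Hd [HkSN Hkvar]; split; simpl.
  - intros Ls (N & L & -> & HN & HL).
    constructor; [exact (proj1 Hd N HN) | exact (HkSN L HL)].
  - intros [|y ys] Hlen; simpl in Hlen; [lia |].
    exists (Tm_Var y), (map Tm_Var ys).
    split; [reflexivity | split; [apply interp_d_var, Hd | apply Hkvar; lia]].
Qed.

Lemma interp_cand_adequate k1 k2 :
  interp_c_adequate k1 -> interp_c_adequate k2 -> interp_c_adequate (C_and k1 k2).
Proof.
  intros [HSN1 Hvar1] [_ Hvar2]; split; simpl.
  - intros Ls [HL _]; exact (HSN1 Ls HL).
  - intros xs Hlen; split; [apply Hvar1 | apply Hvar2]; lia.
Qed.

Lemma interp_adequate :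
  (forall d, interp_d_adequate d) /\ (forall k, interp_c_adequate k).
Proof.
  assert (Hnu : interp_d_adequate D_nu) by (split; simpl; auto).
  assert (Homega : interp_d_adequate D_omega_arr) by (split; simpl; auto).
  split; [apply (dtype_mut interp_d_adequate interp_c_adequate)
         | apply (ctype_mut interp_d_adequate interp_c_adequate)];
    auto using interp_arr_adequate, interp_and_adequate, interp_omega_adequate,
      interp_prod_adequate, interp_cand_adequate.
Qed.

Theorem mainTheorem8 :
  forall (d : dtype) (k : ctype),
    ((forall M, interp_d d M -> SN M) /\ (forall Ls, interp_c k Ls -> SNstar Ls)) /\
    (forall (x : nat) (Ns : stack),
        SN (app_stack (Tm_Var x) Ns) -> interp_d d (app_stack (Tm_Var x) Ns)) /\
    (forall (n : nat) (xs : list nat),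
        clen k <= n -> length xs = n -> interp_c k (map Tm_Var xs)).
Proof.
  intros d k.
  destruct interp_adequate as [Hd Hk].
  destruct (Hd d) as [HdSN HdNeutral], (Hk k) as [HkSN HkVar].
  split; [split | split]; [exact HdSN | exact HkSN | exact HdNeutral |].
  intros n xs Hn <-; exact (HkVar xs Hn).
Qed.
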